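(* Let $X=\{v_1,\dots,v_n\}$ be a finite set, let $w:X\to\mathbb{R}^+$ be a weight function normalized so that $\min_{v\in X}w(v)=1$, and put $w_{\max}=\max_{v\in X}w(v)$. Let $g:2^X\to\mathbb{R}^+$ be monotone nondecreasing with $g(\emptyset)=0$. Consider the minimum general cover problem: minimize $w(C)=\sum_{x\in C}w(x)$ over $C\subseteq X$ subject to $g(C)=g(X)$. Let $C^*$ be an optimal solution, $opt=w(C^* )$, and \[\delta=\min\{g(C\cup\{v\})-g(C)\;:\; C\subset X,\ v\in X\setminus C,\ g(C\cup\{v\})>g(C)\}.\] Suppose that (i) for every $C\subset X$ with $g(C)<g(X)$ there is $v\in X\setminus C$ with $g(C\cup\{v\})-g(C)>0$; and (ii) there is a constant $p$ such that for every $C\subset X$ the elements of $C^*\setminus C$ can be ordered as $v_1,\dots,v_t,v_{t+1},\dots,v_{\hat t}$, where, writing $C^*_0=\emptyset$ and $C^*_i=\{v_1,\dots,v_i\}$, $t$ is the smallest index with $g(C^*_t\cup C)=g(X)$, and for all $i=1,\dots,t$, \[ g(C^*_{i-1}\cup C\cup\{v_i\})-g(C^*_{i-1}\cup C)\le g(C\cup\{v_i\})-g(C)+p.\] Then the greedy algorithm — which starts with $C=\emptyset$ and, while $g(C)<g(X)$, adds to $C$ an element $b\in\arg\max_{v\in X\setminus C}\frac{g(C\cup\{v\})-g(C)}{w(v)}$ — outputs a feasible set $C$ with \[ w(C)\le \left((p+1)\frac{w_{\max}}{\delta}+\ln\frac{g(X)-p\cdot opt}{opt}\right)opt,\] where the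 term $\ln\frac{g(X)-p\cdot opt}{opt}$ is interpreted as $0$ if $g(X)-(p+1)\cdot opt\le 0$.
   Context: $\mathbb{R}^+$ denotes the positive reals. The normalization that the cheapest element has weight $1$ is a standing convention of the paper (so $w_{\max}$ is the ratio of the largest to the smallest weight). ''Approximation ratio'' means the ratio of the weight of the returned solution to $opt$. *)

From HB Require Import structures.
From mathcomp Require Import all_boot all_order all_algebra.
From mathcomp Require Import reals exp.
Set Implicit Arguments. Unset Strict Implicit. Unset Printing Implicit Defensive.
Import Order.TTheory GRing.Theory Num.Theory.
Local Open Scope ring_scope.

(* The ground set X is the full set [set: T] of a finite type T. *)

Definition weight (R : numDomainType) (T : finType) (w : T -> R) (C : {set T}) : R :=
  \sum_(x in C) w x.

Definition gain (R : numDomainType) (T : finType) (g : {set T} -> R)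
  (C : {set T}) (v : T) : R := g (v |: C) - g C.

(* s is a complete execution of the greedy algorithm (with some tie-breaking):
   s lists the elements added, in order. *)
Definition greedy_run (R : numDomainType) (T : finType) (g : {set T} -> R)
  (w : T -> R) (s : seq T) : Prop :=
  (forall (s1 s2 : seq T) (b : T), s = s1 ++ b :: s2 ->
     let C := [set x in s1] in
     [/\ g C < g setT, b \notin C &
         forall v, v \notin C -> gain g C v / w v <= gain g C b / w b])
  /\ g [set x in s] = g setT.

Definition ln_term (R : realType) (gX p opt : R) : R :=
  if gX - (p + 1) * opt <= 0 then 0 else ln ((gX - p * opt) / opt).

From HB Require Import structures.
From mathcomp Require Import all_boot all_order all_algebra.
From mathcomp Require Import reals exp.
From mathcomp Require Import ring lra.
Import Order.TTheory GRing.Theory Num.Theory.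
Set Implicit Arguments. Unset Strict Implicit. Unset Printing Implicit Defensive.
Local Open Scope ring_scope.

(* Let r = g(X) - g(C) be the residual of the current greedy set C.  Condition
   (ii), applied to the elements of C* \ C, shows that the ratio rho picked by
   the greedy algorithm satisfies r <= (rho + p) opt.  Since moreover
   w(b) <= w_max and the gain G of b is at least delta, a step that pays w(b)
   and lowers r by G pays at most G min(w_max / delta, opt / (r - p opt)).
   This is at most the decrease of the potential
     F(r) = (w_max / delta) min(r, (p+1) opt) + opt ln+((r - p opt) / opt),
   whose slope is w_max / delta below (p+1) opt and opt / (r - p opt) above.
   Summing over the run gives w(greedy) <= F(g(X)), and F(g(X)) is at most the
   claimed bound. *)

Lemma lnB_ge1Bdiv (R : realType) (x y : R) :
  0 < x -> 0 < y -> 1 - y / x <= ln x - ln y.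
Proof.
move=> x_gt0 y_gt0.
have yx_gt0 : 0 < y / x by rewrite divr_gt0.
have ln_le : ln (y / x) <= y / x - 1.
  by have := @le_ln1Dx R (y / x - 1); rewrite addrCA subrr addr0; apply; lra.
by rewrite ln_div ?posrE // in ln_le; lra.
Qed.

Section Potential.
Variables (R : realType) (K p opt : R).
Hypothesis opt_gt0 : 0 < opt.

Definition potential (r : R) : R :=
  K * Num.min r ((p + 1) * opt) + opt * ln_term r p opt.

Lemma potential_low r : r <= (p + 1) * opt -> potential r = K * r.
Proof.
move=> r_low; rewrite /potential /ln_term (min_l r_low).
by rewrite subr_le0 r_low mulr0 addr0.
Qed.

Lemma potential_high r :
  (p + 1) * opt <= r -> potential r = K * ((p + 1) * opt) + opt * ln ((r - p * opt) / opt).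
Proof.
rewrite le_eqVlt => /predU1P [<-|r_high].
  rewrite potential_low // (_ : (p + 1) * opt - p * opt = opt); last by ring.
  by rewrite divff ?gt_eqF // ln1 mulr0 addr0.
rewrite /potential /ln_term (min_r (ltW r_high)).
by rewrite subr_le0 leNgt r_high.
Qed.

Lemma potential0 : 0 <= (p + 1) * opt -> potential 0 = 0.
Proof. by move=> P_ge0; rewrite potential_low ?mulr0. Qed.

Lemma potential_slope_low c r r' :
  c <= K -> r' <= r -> r <= (p + 1) * opt -> c * (r - r') <= potential r - potential r'.
Proof.
move=> cK r'r r_low; rewrite !potential_low ?(le_trans r'r) // -mulrBr.
by rewrite ler_wpM2r // subr_ge0.
Qed.

Lemma potential_slope_high c r r' :
  c * (r - p * opt) <= opt -> (p + 1) * opt <= r' -> r' <= r ->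
  c * (r - r') <= potential r - potential r'.
Proof.
move=> c_slope r'_high r'r; rewrite !potential_high ?(le_trans r'_high) //.
have u'_gt0 : 0 < r' - p * opt by have := opt_gt0; lra.
have u_gt0 : 0 < r - p * opt by lra.
set u := r - p * opt in c_slope u_gt0 *; set u' := r' - p * opt in u'_gt0 *.
rewrite ln_div ?posrE // [ln (u' / _)]ln_div ?posrE //.
have -> : K * ((p + 1) * opt) + opt * (ln u - ln opt) -
          (K * ((p + 1) * opt) + opt * (ln u' - ln opt)) = opt * (ln u - ln u') by ring.
have -> : c * (r - r') = c * u * (1 - u' / u) by rewrite /u /u'; field; rewrite gt_eqF.
have frac_ge0 : 0 <= 1 - u' / u by rewrite subr_ge0 ler_pdivrMr ?mul1r // /u /u'; lra.
apply: le_trans (ler_wpM2r frac_ge0 c_slope) _.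
by rewrite ler_wpM2l ?(ltW opt_gt0) // lnB_ge1Bdiv.
Qed.

Lemma potential_slope c r r' :
  c <= K -> c * (r - p * opt) <= opt -> r' <= r ->
  c * (r - r') <= potential r - potential r'.
Proof.
move=> cK c_slope r'r.
have [r_low|r_high] := lerP r ((p + 1) * opt); first exact: potential_slope_low.
have [r'_high|r'_low] := lerP ((p + 1) * opt) r'; first exact: potential_slope_high.
have := potential_slope_low cK (ltW r'_low) (lexx _).
have := potential_slope_high c_slope (lexx _) (ltW r_high).
have -> : c * (r - r') = c * (r - (p + 1) * opt) + c * ((p + 1) * opt - r') by ring.
lra.
Qed.

Lemma potential_le_bound r :
  0 <= K -> potential r <= ((p + 1) * K + ln_term r p opt) * opt.
Proof.
move=> K_ge0; rewrite /potential [in leRHS]mulrDl [ln_term _ _ _ * _]mulrC lerD2r.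
rewrite (_ : (p + 1) * K * opt = K * ((p + 1) * opt)); last by ring.
by rewrite ler_wpM2l // ge_min lexx orbT.
Qed.

End Potential.

Lemma set_rcons (T : finType) (s : seq T) b : [set x in rcons s b] = b |: [set x in s].
Proof. by apply/setP => x; rewrite !inE mem_rcons in_cons. Qed.

Section Weight.
Variables (R : numDomainType) (T : finType) (w : T -> R).

Lemma weight_setU1 (C : {set T}) b : b \notin C -> weight w (b |: C) = w b + weight w C.
Proof. exact: big_setU1. Qed.

Lemma weight_ge0 (C : {set T}) : (forall v, 0 <= w v) -> 0 <= weight w C.
Proof. by move=> w_ge0; apply: sumr_ge0. Qed.

Lemma weight_gt0 (C : {set T}) : (forall v, 0 < w v) -> C != set0 -> 0 < weight w C.
Proof.
move=> w_gt0 /set0Pn [x xC]; rewrite /weight (big_setD1 x xC) /=.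
by rewrite ltr_wpDr ?w_gt0 // sumr_ge0 // => v _; apply: ltW.
Qed.

Lemma weight_setD (A C : {set T}) : (forall v, 0 <= w v) -> weight w (A :\: C) <= weight w A.
Proof.
by move=> w_ge0; rewrite [weight w A](big_setID C) /= lerDr weight_ge0.
Qed.

End Weight.

Definition ratio (R : numDomainType) (T : finType) (g : {set T} -> R) (w : T -> R)
  (C : {set T}) (v : T) : R := gain g C v / w v.

Definition greedy_step (R : numDomainType) (T : finType) (g : {set T} -> R)
  (w : T -> R) (C : {set T}) (b : T) : Prop :=
  [/\ g C < g setT, b \notin C & forall v, v \notin C -> ratio g w C v <= ratio g w C b].

Definition greedy_prefix (R : numDomainType) (T : finType) (g : {set T} -> R)
  (w : T -> R) (s : seq T) : Prop :=
  forall (s1 s2 : seq T) (b : T), s = s1 ++ b :: s2 -> greedy_step g w [set x in s1] b.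

Lemma greedy_prefix_rcons (R : numDomainType) (T : finType) (g : {set T} -> R)
  (w : T -> R) s b :
  greedy_prefix g w (rcons s b) <-> greedy_prefix g w s /\ greedy_step g w [set x in s] b.
Proof.
split=> [pre|[pre step] s1 s2 b'].
  split; last by apply: pre; rewrite -cats1.
  by move=> s1 s2 b' s_eq; apply: (pre s1 (rcons s2 b)); rewrite s_eq rcons_cat rcons_cons.
case/lastP: s2 => [|s2 c]; first by rewrite cats1 => /rcons_inj [<- <-].
by rewrite -rcons_cons -rcons_cat => /rcons_inj [s_eq _]; apply: pre s_eq.
Qed.

Lemma greedy_run_nil (R : numDomainType) (T : finType) (g : {set T} -> R) (w : T -> R) s :
  g set0 = g setT -> greedy_run g w s -> s = [::].
Proof.
case: s => [//|b s] g0_feasible [pre _].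
by have [] := pre [::] s b erefl; rewrite set_nil g0_feasible ltxx.
Qed.

Section GreedyExistence.
Variables (R : realDomainType) (T : finType) (w : T -> R) (g : {set T} -> R).
Hypothesis g_mono : forall A B : {set T}, A \subset B -> g A <= g B.
Hypothesis gain_pos : forall C : {set T}, g C < g setT -> exists2 v, v \notin C & 0 < gain g C v.

Lemma greedy_step_exists C : g C < g setT -> exists b, greedy_step g w C b.
Proof.
move=> C_infeasible; have [v vC _] := gain_pos C_infeasible.
exists (Order.arg_max v (fun b => b \notin C) (ratio g w C)).
by case: arg_maxP => // b bC b_max; split=> // u /b_max.
Qed.

Lemma greedy_run_exists : exists s, greedy_run g w s.
Proof.
suff run_from n s : greedy_prefix g w s -> (#|~: [set x in s]| < n)%N ->
    exists s', greedy_run g w (s ++ s').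
  have nil_prefix : greedy_prefix g w [::] by case.
  have [|s' run] := run_from #|T|.+1 [::] nil_prefix; last by exists s'.
  by rewrite ltnS max_card.
elim: n s => [|n IH] s pre card_lt; first by rewrite ltn0 in card_lt.
have [feasible|infeasible] := eqVneq (g [set x in s]) (g setT).
  by exists [::]; rewrite cats0.
have [b step] : exists b, greedy_step g w [set x in s] b.
  by apply: greedy_step_exists; rewrite lt_neqAle infeasible g_mono ?subsetT.
have [_ b_new _] := step.
have card_rcons : (#|~: [set x in rcons s b]| < #|~: [set x in s]|)%N.
  have -> : ~: [set x in rcons s b] = ~: [set x in s] :\ b.
    by apply/setP => x; rewrite set_rcons !inE negb_or andbC.
  by rewrite [in ltnRHS](cardsD1 b) inE b_new add1n.
have pre' : greedy_prefix g w (rcons s b) by apply/greedy_prefix_rcons.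
have [s' run] := IH _ pre' (leq_trans card_rcons card_lt).
by exists (b :: s'); rewrite -cat_rcons.
Qed.

End GreedyExistence.

Definition cover_exchange (R : numDomainType) (T : finType) (g : {set T} -> R)
  (p : R) (Cstar C : {set T}) : Prop :=
  exists (s : seq T) (t : nat),
    [/\ perm_eq s (enum (Cstar :\: C)),
        (t <= size s)%N,
        g ([set x in take t s] :|: C) = g setT,
        (forall j, (j < t)%N -> g ([set x in take j s] :|: C) != g setT) &
        (forall (i : nat) (v : T), (1 <= i <= t)%N -> v = nth v s i.-1 ->
           g (v |: ([set x in take i.-1 s] :|: C)) - g ([set x in take i.-1 s] :|: C)
             <= g (v |: C) - g C + p)].

Lemma cover_exchange_p_ge0 (R : numDomainType) (T : finType) (g : {set T} -> R)
  (p : R) (Cstar C : {set T}) :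
  g C < g setT -> cover_exchange g p Cstar C -> 0 <= p.
Proof.
move=> C_infeasible [s [[|t] [_ t_le feasible _ incr]]].
  by move: feasible; rewrite take0 set_nil set0U => /eqP; rewrite lt_eqF.
case: s t_le incr {feasible} => [//|v s] _ /(_ 1%N v isT erefl).
by rewrite /= set_nil set0U -subr_ge0 addrAC subrr add0r.
Qed.

Lemma exchange_prefix_gain (R : realDomainType) (T : finType) (g : {set T} -> R)
  (p : R) (C : {set T}) (s : seq T) (t : nat) :
  (t <= size s)%N ->
  (forall (i : nat) (v : T), (1 <= i <= t)%N -> v = nth v s i.-1 ->
     g (v |: ([set x in take i.-1 s] :|: C)) - g ([set x in take i.-1 s] :|: C)
       <= g (v |: C) - g C + p) ->
  forall i, (i <= t)%N ->
    g ([set x in take i s] :|: C) - g C <= \sum_(x <- take i s) (gain g C x + p).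
Proof.
move=> t_le incr; elim=> [|i IH] i_lt.
  by rewrite take0 big_nil set_nil set0U subrr.
have i_size : (i < size s)%N := leq_trans i_lt t_le.
have x0 : T by case: s {incr IH t_le} i_size.
have v_incr := incr i.+1 (nth x0 s i) i_lt (set_nth_default _ _ i_size).
rewrite (take_nth x0 i_size) set_rcons big_rcons -setUA.
have := IH (ltnW i_lt); rewrite /gain; move: v_incr => /=; lra.
Qed.

Section ExchangeBound.
Variables (R : realFieldType) (T : finType) (w : T -> R) (g : {set T} -> R).
Variables (p : R) (Cstar : {set T}).
Hypothesis w_ge1 : forall v, 1 <= w v.
Hypothesis g_mono : forall A B : {set T}, A \subset B -> g A <= g B.
Hypothesis p_ge0 : 0 <= p.

Lemma residual_le_ratio_opt C b :
  cover_exchange g p Cstar C -> b \notin C ->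
  (forall v, v \notin C -> ratio g w C v <= ratio g w C b) ->
  g setT - g C <= (ratio g w C b + p) * weight w Cstar.
Proof.
move=> [s [t [perm_s t_le feasible _ incr]]] bC b_max.
have w_gt0 v : 0 < w v := lt_le_trans ltr01 (w_ge1 v).
set rho := ratio g w C b.
have rho_ge0 : 0 <= rho by rewrite divr_ge0 ?(ltW (w_gt0 b)) // subr_ge0 g_mono ?subsetUr.
have elem_gain x : x \in s -> gain g C x + p <= (rho + p) * w x.
  rewrite (perm_mem perm_s) mem_enum inE => /andP [xC _].
  have : gain g C x <= rho * w x by rewrite -ler_pdivrMr // b_max.
  have := w_ge1 x; have := p_ge0; nra.
rewrite -feasible; apply: le_trans (exchange_prefix_gain t_le incr (leqnn t)) _.
apply: le_trans (_ : \sum_(x <- take t s) (rho + p) * w x <= _).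
  by rewrite !big_seq; apply: ler_sum => x /mem_take /elem_gain.
rewrite -mulr_sumr ler_wpM2l ?addr_ge0 //.
apply: le_trans (weight_setD Cstar C (fun v => ltW (w_gt0 v))).
rewrite /weight -big_enum -(perm_big _ perm_s) -[in leRHS](cat_take_drop t s) big_cat /=.
by rewrite lerDl sumr_ge0 // => x _; apply: ltW.
Qed.

End ExchangeBound.

Section GreedyBound.
Variables (R : realType) (T : finType) (w : T -> R) (g : {set T} -> R).
Variables (p wmax delta : R) (Cstar : {set T}).
Hypothesis w_ge1 : forall v, 1 <= w v.
Hypothesis w_le_wmax : forall v, w v <= wmax.
Hypothesis g_mono : forall A B : {set T}, A \subset B -> g A <= g B.
Hypothesis gain_pos : forall C : {set T}, g C < g setT -> exists2 v, v \notin C & 0 < gain g C v.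
Hypothesis delta_le_gain :
  forall (C : {set T}) (v : T), v \notin C -> 0 < gain g C v -> delta <= gain g C v.
Hypothesis exchange : forall C : {set T}, cover_exchange g p Cstar C.
Hypothesis p_ge0 : 0 <= p.
Hypothesis delta_gt0 : 0 < delta.
Hypothesis opt_gt0 : 0 < weight w Cstar.

Let opt := weight w Cstar.
Let F := potential (wmax / delta) p opt.

Lemma w_gt0 v : 0 < w v.
Proof. exact: lt_le_trans ltr01 (w_ge1 v). Qed.

Lemma greedy_step_gain_gt0 C b : greedy_step g w C b -> 0 < gain g C b.
Proof.
move=> [C_infeasible _ b_max]; have [v vC v_gain] := gain_pos C_infeasible.
have : 0 < ratio g w C b by apply: lt_le_trans (b_max v vC); rewrite divr_gt0 ?w_gt0.
by rewrite /ratio pmulr_lgt0 // invr_gt0 w_gt0.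
Qed.

Lemma greedy_step_potential C b :
  greedy_step g w C b -> w b + F (g setT - g (b |: C)) <= F (g setT - g C).
Proof.
move=> step; have G_gt0 := greedy_step_gain_gt0 step.
have [_ bC b_max] := step.
set G := gain g C b in G_gt0 *; set c := w b / G.
have c_le : c <= wmax / delta.
  rewrite /c ler_pM ?(ltW (w_gt0 b)) ?invr_ge0 ?(ltW G_gt0) //.
  by rewrite lef_pV2 ?posrE // delta_le_gain.
have c_slope : c * (g setT - g C - p * opt) <= opt.
  have := residual_le_ratio_opt w_ge1 g_mono p_ge0 (exchange C) bC b_max.
  rewrite /ratio -/G -/opt => residual_le.
  have c_opt : c * (G / w b * opt) = opt by rewrite /c; field; rewrite !gt_eqF ?w_gt0.
  rewrite -[leRHS]c_opt ler_wpM2l ?divr_ge0 ?(ltW (w_gt0 b)) ?(ltW G_gt0) //.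
  lra.
have r_decr : g setT - g (b |: C) <= g setT - g C by rewrite lerD2l lerN2 g_mono ?subsetUr.
have := potential_slope opt_gt0 c_le c_slope r_decr.
have -> : c * (g setT - g C - (g setT - g (b |: C))) = w b.
  by rewrite /c /G /gain; field; rewrite gt_eqF.
rewrite -/opt -/F; lra.
Qed.

Lemma greedy_prefix_potential s :
  greedy_prefix g w s ->
  weight w [set x in s] + F (g setT - g [set x in s]) <= F (g setT - g set0).
Proof.
elim/last_ind: s => [|s b IH]; first by rewrite set_nil /weight big_set0 add0r.
case/greedy_prefix_rcons => pre step; have [_ bs _] := step.
rewrite set_rcons weight_setU1 //.
have := greedy_step_potential step; have := IH pre; lra.
Qed.

Lemma greedy_run_weight_le s :
  g set0 = 0 -> greedy_run g w s -> weight w [set x in s] <= F (g setT).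
Proof.
move=> g0 [pre feasible]; have := greedy_prefix_potential pre.
rewrite feasible g0 subrr subr0 /F potential0 ?addr0 //.
by rewrite mulr_ge0 // ?(ltW opt_gt0) // addr_ge0.
Qed.

End GreedyBound.

Theorem theorem1 (R : realType) (T : finType) (w : T -> R) (g : {set T} -> R)
  (wmax delta p : R) (Cstar : {set T})
  (* normalization: min weight is 1 (so all weights are positive) *)
  (Hwmin : (exists v, w v = 1) /\ (forall v, 1 <= w v))
  (* wmax = max weight *)
  (Hwmax : (exists v, w v = wmax) /\ (forall v, w v <= wmax))
  (* g monotone nondecreasing, g(∅) = 0 *)
  (Hmono : forall A B : {set T}, A \subset B -> g A <= g B)
  (Hg0 : g set0 = 0)
  (* Cstar is an optimal solution of the general cover problem *)
  (Hfeas : g Cstar = g setT)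
  (Hopt : forall C : {set T}, g C = g setT -> weight w Cstar <= weight w C)
  (* delta = min of the positive marginal gains *)
  (Hdelta : (exists (C : {set T}) (v : T), v \notin C /\ 0 < gain g C v /\ gain g C v = delta) /\
            (forall (C : {set T}) (v : T), v \notin C -> 0 < gain g C v -> delta <= gain g C v))
  (* condition (i) *)
  (Hi : forall C : {set T}, g C < g setT -> exists2 v, v \notin C & 0 < gain g C v)
  (* condition (ii) with constant p *)
  (Hii : forall C : {set T}, exists (s : seq T) (t : nat),
      [/\ perm_eq s (enum (Cstar :\: C)),
          (t <= size s)%N,
          g ([set x in take t s] :|: C) = g setT,
          (forall j, (j < t)%N -> g ([set x in take j s] :|: C) != g setT) &
          (forall (i : nat) (v : T), (1 <= i <= t)%N -> v = nth v s i.-1 ->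
             g (v |: ([set x in take i.-1 s] :|: C)) - g ([set x in take i.-1 s] :|: C)
               <= g (v |: C) - g C + p)]) :
  (exists s : seq T, greedy_run g w s) /\
  (forall s : seq T, greedy_run g w s ->
     g [set x in s] = g setT /\
     weight w [set x in s] <=
       ((p + 1) * (wmax / delta) +
        ln_term (g setT) p (weight w Cstar)) * weight w Cstar).
Proof.
have [_ w_ge1] := Hwmin; have [[v_max wmax_eq] w_le_wmax] := Hwmax.
have [[C0 [v0 [_ [gain_gt0 gain_eq]]]] delta_le_gain] := Hdelta.
have delta_gt0 : 0 < delta by rewrite -gain_eq.
split; first exact: greedy_run_exists.
move=> s run; split; first by case: run.
have w_ge0 v : 0 <= w v := le_trans ler01 (w_ge1 v).
have [gX_le0|gX_gt0] := lerP (g setT) 0.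
  have g0_feasible : g set0 = g setT.
    by apply/le_anti; rewrite Hmono ?sub0set //= Hg0 gX_le0.
  have opt0 : weight w Cstar = 0.
    apply/le_anti; rewrite weight_ge0 // andbT.
    by have := Hopt set0 g0_feasible; rewrite /weight big_set0.
  by rewrite (greedy_run_nil g0_feasible run) opt0 mulr0 set_nil /weight big_set0.
have Cstar_ne0 : Cstar != set0.
  by apply: contraTneq gX_gt0 => Cstar0; rewrite -Hfeas Cstar0 Hg0 ltxx.
have p_ge0 : 0 <= p by apply: (cover_exchange_p_ge0 _ (Hii set0)); rewrite Hg0.
apply: le_trans (greedy_run_weight_le w_ge1 w_le_wmax Hmono Hi delta_le_gain Hii p_ge0
  delta_gt0 (weight_gt0 (w_gt0 w_ge1) Cstar_ne0) Hg0 run) _.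
apply: potential_le_bound.
by rewrite divr_ge0 ?(ltW delta_gt0) // -wmax_eq w_ge0.
Qed.
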